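(* Let $q=2^k$ with $k\ge1$, and let $f(X)\in\mathbb{F}_q[X]$ be non-separable (i.e. $f'(X)=0$) of degree $n\ge 6$. Let $\Delta$ be the set of all $a\in\mathbb{F}_q$ for which $g_a(X):=(f(X+a)+f(a))/X$ equals $v(X)\circ D_s(X,b)$ for some $v(X)\in\mathbb{F}_q[X]$, some integer $s\ge 5$, and some $b\in\mathbb{F}_q^*$. If $|\Delta|>3$, then $f(X)=\rho(X)\circ X^6\circ\eta(X)$ for some degree-one $\rho(X),\eta(X)\in\mathbb{F}_q[X]$.
   Context: For $b\in\mathbb{F}_q$ and positive integer $s$, the Dickson polynomial $D_s(X,b)$ is the unique polynomial with $D_s(X+b/X,b)=X^s+b^s/X^s$; explicitly $D_s(X,b)=\sum_{i=0}^{\lfloor s/2\rfloor}\frac{s}{s-i}\binom{s-i}{i}(-b)^iX^{s-2i}$. *)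

From HB Require Import structures.
From mathcomp Require Import all_boot all_order all_algebra.
From mathcomp Require Import boolp.
Set Implicit Arguments. Unset Strict Implicit. Unset Printing Implicit Defensive.
Import GRing.Theory.
Local Open Scope ring_scope.

(* The coefficient s/(s-i) * C(s-i,i) is a nonnegative integer, computed as the
   exact natural-number quotient (s * C(s-i,i)) / (s-i). *)
Definition dickson (R : nzRingType) (s : nat) (b : R) : {poly R} :=
  \sum_(i < s./2.+1)
     (((s * 'C(s - i, i)) %/ (s - i))%:R * (- b) ^+ i) *: 'X^(s - 2 * i).

Definition gshift (R : idomainType) (f : {poly R}) (a : R) : {poly R} :=
  (f \Po ('X + a%:P) + (f.[a])%:P) %/ 'X.

Definition in_Delta (F : fieldType) (f : {poly F}) (a : F) : Prop :=
  exists (v : {poly F}) (s : nat) (b : F),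
    (5 <= s)%N /\ b != 0 /\ gshift f a = v \Po dickson s b.

Definition Delta (F : finFieldType) (f : {poly F}) : {set F} :=
  [set a | `[< in_Delta f a >]].

(* In characteristic 2, f' = 0 means f = h(X^2), so f(X + a) = h(X^2 + a^2) and the
   coefficient of X^(2N-1-2j) in g_a is the Hasse derivative h^[N-j](a^2), N = deg h.
   Reading the top coefficients of v(D_s(X, b)) off the reversed Dickson polynomial
   (and using s, deg v odd, s * deg v = 2N - 1) shows that every A = a^2, a in Delta,
   satisfies h^[N-1](A) = h_N b, h^[N-2](A) = (N mod 2) h_N b^2, and h^[N-3](A) = 0
   when N = 3 mod 4, for some b != 0.  These are polynomial relations of degree at
   most 3 in A with four distinct solutions, so they hold identically; the
   coefficients then rule out every N except N = 3, where they force
   h_3 h_1 = h_2^2, i.e. h = h_3 (X + t)^3 + c and f = h_3 (X + sqrt t)^6 + c. *)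

From HB Require Import structures.
From mathcomp Require Import all_boot all_order all_algebra.
From mathcomp Require Import finfield zify ring.
Set Implicit Arguments. Unset Strict Implicit. Unset Printing Implicit Defensive.
Import GRing.Theory.

Lemma odd_bin_add8 n k : k < 8 -> odd 'C(n + 8, k) = odd 'C(n, k).
Proof.
move=> lt_k8; rewrite addnC -binomial.Vandermonde big_ord_recl bin0 mul1n subn0 oddD.
have : 2 %| \sum_(i < k) 'C(8, bump 0 i) * 'C(n, k - bump 0 i).
  apply: dvdn_sum => i _; apply: dvdn_mulr; have : i < 7 by have := ltn_ord i; lia.
  by case: (val i) => [|[|[|[|[|[|[|]]]]]]].
by rewrite dvdn2 => /negbTE ->; rewrite addbF.
Qed.

Lemma odd_bin_mod8 n k : k < 8 -> odd 'C(n, k) = odd 'C(n %% 8, k).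
Proof.
move=> lt_k8; rewrite {1}(divn_eq n 8) addnC.
by elim: (n %/ 8) => [|q IHq]; rewrite ?mul0n ?addn0 // mulSn addnCA addnC odd_bin_add8.
Qed.

Lemma odd_bin2 n : odd n -> odd 'C(n, 2) = (n %% 4 == 3).
Proof.
rewrite odd_bin_mod8 // -(odd_mod n (erefl : odd 8 = false)) -(modn_dvdm n (isT : 4 %| 8)).
by move: (ltn_pmod n (isT : 0 < 8)); case: (n %% 8) => [|[|[|[|[|[|[|[|]]]]]]]].
Qed.

Lemma odd_bin3 n : n %% 4 = 3 -> odd 'C(n, 3).
Proof.
rewrite odd_bin_mod8 // -(modn_dvdm n (isT : 4 %| 8)).
by move: (ltn_pmod n (isT : 0 < 8)); case: (n %% 8) => [|[|[|[|[|[|[|[|]]]]]]]].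
Qed.

Definition dickson_coef s i := (s * 'C(s - i, i)) %/ (s - i).

Lemma dickson_coef0 s : 0 < s -> dickson_coef s 0 = 1.
Proof. by move=> s_gt0; rewrite /dickson_coef subn0 bin0 muln1 divnn s_gt0. Qed.

Lemma dickson_coefS s i : i.+1 < s ->
  dickson_coef s i.+1 = 'C(s - i.+1, i.+1) + 'C(s - i.+2, i).
Proof.
move=> lt_is; rewrite /dickson_coef; set n := s - i.+1.
have -> : s * 'C(n, i.+1) = n * ('C(n, i.+1) + 'C(s - i.+2, i)).
  have := mul_bin_diag n i; rewrite (_ : n.-1 = s - i.+2); last by rewrite /n; lia.
  by rewrite mulnDr => ->; rewrite -mulnDl /n; congr (_ * _); lia.
by rewrite mulKn // /n subn_gt0.
Qed.

Lemma dickson_coef1 s : 1 < s -> dickson_coef s 1 = s.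
Proof. by move=> s_gt1; rewrite dickson_coefS // bin0 bin1; lia. Qed.

Lemma dickson_coef_eq0 s i : s./2 < i -> dickson_coef s i = 0.
Proof.
move=> lt_s2i; rewrite /dickson_coef bin_small ?muln0 ?div0n //.
by have := odd_double_half s; rewrite -addnn; case: (odd s) => /=; lia.
Qed.

Lemma odd_dickson_coef_add8 s i : i < 8 -> i < s ->
  odd (dickson_coef (s + 8) i) = odd (dickson_coef s i).
Proof.
case: i => [|i] lt_i8 lt_is; first by rewrite !dickson_coef0 // addn_gt0 lt_is.
rewrite !dickson_coefS ?ltn_addr // !oddD.
rewrite (_ : s + 8 - i.+1 = s - i.+1 + 8); last by lia.
by rewrite (_ : s + 8 - i.+2 = s - i.+2 + 8) ?odd_bin_add8 //; lia.
Qed.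

Lemma odd_dickson_exp_coefs s d : 4 < s -> odd s -> odd d ->
  odd (d * dickson_coef s 2 + 'C(d, 2)) = (s * d %% 4 == 1) /\
  (s * d %% 8 = 5 -> ~~ odd (d * dickson_coef s 3 + 'C(d, 3))).
Proof.
(* Both claims are 8-periodic in s and in d, which leaves a finite check. *)
pose P s d := odd s ==> odd d ==>
  (odd (d * dickson_coef s 2 + 'C(d, 2)) == (s * d %% 4 == 1)) &&
  ((s * d %% 8 == 5) ==> ~~ odd (d * dickson_coef s 3 + 'C(d, 3))).
have P_addr8 s' d' : P s' (d' + 8) = P s' d'.
  rewrite /P !(oddD, oddM) !odd_bin_add8 //= ?addbF.
  have -> : s' * (d' + 8) %% 4 = s' * d' %% 4 by lia.
  by have -> : s' * (d' + 8) %% 8 = s' * d' %% 8 by lia.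
have P_addl8 s' d' : 3 < s' -> P (s' + 8) d' = P s' d'.
  move=> lt3s; have lt2s := ltnW lt3s.
  rewrite /P !(oddD, oddM) !odd_dickson_coef_add8 //= ?addbF.
  have -> : (s' + 8) * d' %% 4 = s' * d' %% 4 by lia.
  by have -> : (s' + 8) * d' %% 8 = s' * d' %% 8 by lia.
have P_small a c : a < 8 -> c < 8 -> P (a + 5) c.
  by case: a => [|[|[|[|[|[|[|[|]]]]]]]]; case: c => [|[|[|[|[|[|[|[|]]]]]]]].
move=> lt4s odd_s odd_d.
suff : P s d by rewrite /P odd_s odd_d /= => /andP[/eqP -> /implyP P3]; split => // /eqP.
rewrite (divn_eq d 8) addnC; elim: (d %/ 8) => [|q IHq]; last first.
  by rewrite mulSn addnCA addnC P_addr8.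
rewrite mul0n addn0 (_ : s = (s - 5) %% 8 + 5 + (s - 5) %/ 8 * 8); last by lia.
elim: ((s - 5) %/ 8) => [|q IHq]; first by rewrite mul0n addn0 P_small ?ltn_pmod.
by rewrite mulSn addnCA addnC P_addl8 //; lia.
Qed.

Local Open Scope ring_scope.

Lemma natr_pchar2 (R : nzSemiRingType) : 2 \in [pchar R] -> forall n, n%:R = (odd n)%:R :> R.
Proof. by move=> pchar2 n; rewrite -(GRing.natr_mod_pchar pchar2) modn2. Qed.

Lemma sqr_inj_pchar2 (R : idomainType) : 2 \in [pchar R] -> injective (fun x : R => x ^+ 2).
Proof.
move=> pchar2 x y /= eq_sq; have : (x - y) ^+ 2 = 0.
  by rewrite sqrrB (mulrn_pchar pchar2) subr0 -(oppr_pchar2 pchar2 (y ^+ 2)) eq_sq subrr.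
by move/eqP; rewrite expf_eq0 subr_eq0 => /eqP.
Qed.

Lemma deriv_eq0_comp_X2 (R : nzRingType) (f : {poly R}) :
  2 \in [pchar R] -> f^`() = 0 -> exists h, f = h \Po 'X^2.
Proof.
move=> pchar2 f'0; exists (even_poly f); rewrite -[LHS]poly_even_odd.
suff -> : odd_poly f = 0 by rewrite comp_poly0 mul0r addr0.
apply/polyP => i; rewrite coef_odd_poly coef0.
have := congr1 (coefp i.*2) f'0; rewrite /= coef_deriv coef0 -mulr_natr.
by rewrite (natr_pchar2 pchar2) /= odd_double mulr1.
Qed.

Lemma sqrt_pchar2 (F : finFieldType) : 2 \in [pchar F] -> forall x : F, exists u, u ^+ 2 = x.
Proof.
move=> pchar2 x; have [sqrt _ sqrtK] := injF_bij (sqr_inj_pchar2 pchar2).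
by exists (sqrt x); rewrite sqrtK.
Qed.

Lemma poly_wide (R : nzSemiRingType) n (p : {poly R}) :
  (size p <= n)%N -> p = \sum_(i < n) p`_i *: 'X^i.
Proof.
move=> le_pn; rewrite -poly_def; apply/polyP => i; rewrite coef_poly.
by case: ltnP => // le_ni; rewrite nth_default // (leq_trans le_pn le_ni).
Qed.

Lemma coef_size_neq0 (R : nzSemiRingType) (p : {poly R}) n : size p = n.+1 -> p`_n != 0.
Proof.
by move=> size_p; have := lead_coef_eq0 p; rewrite lead_coefE size_p -size_poly_eq0 size_p => ->.
Qed.

Lemma size_exp_leq (R : nzSemiRingType) (p : {poly R}) s k :
  (size p <= s.+1)%N -> (size (p ^+ k) <= (s * k).+1)%N.
Proof.
move=> le_ps; rewrite (leq_trans (size_poly_exp_leq _ _)) // ltnS leq_mul2r.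
by move: le_ps; lia.
Qed.

Lemma coef_exp_low (R : comNzRingType) (r : {poly R}) d : r`_0 = 1 ->
  [/\ (r ^+ d)`_0 = 1, (r ^+ d)`_1 = d%:R * r`_1,
      (r ^+ d)`_2 = d%:R * r`_2 + 'C(d, 2)%:R * r`_1 ^+ 2
    & (r ^+ d)`_3 = d%:R * r`_3 + ('C(d, 2) * 2)%:R * (r`_1 * r`_2)
                    + 'C(d, 3)%:R * r`_1 ^+ 3].
Proof.
move=> r0; elim: d => [|d [c0 c1 c2 c3]]; first by rewrite expr0 !coefC /= !mul0r !addr0.
rewrite exprSr !coefM !big_ord_recr !big_ord0 /= !subnn !subSS !subn0 c0 c1 c2 c3 r0.
by rewrite !binS ?bin0 ?bin1 !natrM !natrD; split; ring.
Qed.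

Lemma coef_comp_poly_XaddC (R : comNzRingType) (p : {poly R}) c i :
  (p \Po ('X + c%:P))`_i = (p^`N(i)).[c].
Proof.
rewrite /comp_poly addrC nderiv_taylor; last exact: mulrC.
rewrite size_map_polyC coef_sum.
under eq_bigr => j _ do rewrite nderivn_map horner_map /= coefCM coefXn.
have [lt_ip | le_pi] := ltnP i (size p); last first.
  rewrite nderivn_poly0 ?horner0 // big1 // => j _.
  by rewrite (_ : (i == j)%N = false) ?mulr0 //; apply/negbTE; have := ltn_ord j; lia.
rewrite (bigD1 (Ordinal lt_ip)) //= eqxx mulr1 big1 ?addr0 // => j /eqP neq_ji.
by rewrite (_ : (i == j)%N = false) ?mulr0 //; apply/negbTE/eqP => eq_ij; apply/neq_ji/val_inj.
Qed.

Lemma size_nderivn_leq (R : nzRingType) (p : {poly R}) n :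
  (size (p^`N(n)) <= size p - n)%N.
Proof. by apply/leq_sizeP => i le_i; rewrite coef_nderivn nth_default ?mul0rn // -leq_subLR. Qed.

Lemma horner_nderivn_top (R : nzRingType) (p : {poly R}) N j x :
  (size p <= N.+1)%N -> (j <= N)%N ->
  (p^`N(N - j)).[x] = \sum_(i < j.+1) p`_(N - j + i) *+ 'C(N - j + i, N - j) * x ^+ i.
Proof.
move=> le_pN le_jN; rewrite (@horner_coef_wide _ j.+1).
  by apply: eq_bigr => i _; rewrite coef_nderivn.
by rewrite (leq_trans (size_nderivn_leq _ _)) //; lia.
Qed.

Section NderivnTop.
Variables (R : nzRingType) (h : {poly R}) (N : nat).
Hypothesis size_h : size h = N.+1.

Lemma horner_nderivn_top0 x : (h^`N(N)).[x] = h`_N.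
Proof.
have := horner_nderivn_top x (eq_leq size_h) (leq0n N).
by rewrite subn0 big_ord1 addn0 binn mulr1n expr0 mulr1.
Qed.

Lemma horner_nderivn_top1 x : (0 < N)%N ->
  (h^`N(N - 1)).[x] = h`_(N - 1) + N%:R * h`_N * x.
Proof.
move=> N_gt0; rewrite (horner_nderivn_top _ (eq_leq size_h) N_gt0) !big_ord_recr big_ord0 /=.
by rewrite addn0 subnK // binn bin_sub // bin1 expr0 expr1 mulr1 mulr_natl add0r mulr1n.
Qed.

Lemma horner_nderivn_top2 x : (1 < N)%N ->
  (h^`N(N - 2)).[x] = h`_(N - 2) + (N - 1)%:R * h`_(N - 1) * x + 'C(N, 2)%:R * h`_N * x ^+ 2.
Proof.
move=> lt1N; rewrite (horner_nderivn_top _ (eq_leq size_h) lt1N) !big_ord_recr big_ord0 /=.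
rewrite addn0 subnK // binn bin_sub // add0r expr0 expr1 mulr1 !mulr_natl mulr1n.
rewrite (_ : (N - 2 + 1 = N - 1)%N); last by lia.
by rewrite (_ : (N - 2 = N - 1 - 1)%N) ?bin_sub ?bin1 //; lia.
Qed.

End NderivnTop.

Lemma card_roots_lt_size (R : finIdomainType) (p : {poly R}) (S : {set R}) :
  p != 0 -> {in S, forall x, root p x} -> (#|S| < size p)%N.
Proof.
move=> p_neq0 rootS; rewrite cardE max_poly_roots ?enum_uniq //.
by apply/allP => x; rewrite mem_enum => /rootS.
Qed.

Section Reversal.
Variable R : comNzRingType.
Implicit Types p q : {poly R}.

Definition revp n p : {poly R} := \poly_(i < n.+1) p`_(n - i).

Lemma coef_revp n p i : (revp n p)`_i = if (i <= n)%N then p`_(n - i) else 0.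
Proof. by rewrite coef_poly ltnS. Qed.

Fact revp_is_linear n : linear (revp n).
Proof.
move=> c p q; apply/polyP => i.
by rewrite !(coefD, coefZ, coef_revp); case: leqP; rewrite ?mulr0 ?addr0.
Qed.

HB.instance Definition _ n :=
  GRing.isLinear.Build R {poly R} {poly R} _ (revp n) (revp_is_linear n).

Lemma revpXn n e : (e <= n)%N -> revp n 'X^e = 'X^(n - e).
Proof.
move=> le_en; apply/polyP => i; rewrite coef_revp !coefXn.
case: leqP => [le_in | lt_ni]; first by congr (_%:R); apply/eqP/eqP; lia.
by rewrite (_ : (i == n - e)%N = false) //; apply/negbTE/eqP; lia.
Qed.

Lemma revpM m n p q : (size p <= m.+1)%N -> (size q <= n.+1)%N ->
  revp (m + n) (p * q) = revp m p * revp n q.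
Proof.
move=> le_pm le_qn; rewrite (poly_wide le_pm) (poly_wide le_qn) mulr_suml.
rewrite !linear_sum /= mulr_suml; apply: eq_bigr => i _.
rewrite mulr_sumr !linear_sum /= mulr_sumr; apply: eq_bigr => j _.
rewrite -scalerAl -scalerAr -exprD !linearZ /= -scalerAl -scalerAr.
have lt_im := ltn_ord i; have lt_jn := ltn_ord j.
by rewrite !revpXn -?exprD; try congr (_ *: (_ *: 'X^_)); lia.
Qed.

Lemma revp_addn n e p : (size p <= n.+1)%N -> revp (n + e) p = 'X^e * revp n p.
Proof.
move=> le_pn; rewrite -[p in LHS]mulr1 revpM ?size_poly1 // mulrC.
by rewrite -(expr0 'X) revpXn // subn0.
Qed.

Lemma revpX s k p : (size p <= s.+1)%N -> revp (s * k) (p ^+ k) = revp s p ^+ k.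
Proof.
move=> le_ps; elim: k => [|k IHk]; first by rewrite muln0 !expr0 -(expr0 'X) revpXn.
by rewrite exprSr mulnSr revpM ?size_exp_leq // IHk exprSr.
Qed.

Lemma revp_comp s d (v D : {poly R}) : (size D <= s.+1)%N -> (size v <= d.+1)%N ->
  revp (s * d) (v \Po D) = \sum_(i < d.+1) v`_i *: ('X^(s * (d - i)) * revp s D ^+ i).
Proof.
move=> le_Ds le_vd; rewrite {1}(poly_wide le_vd) linear_sum /= linear_sum.
apply: eq_bigr => i _; rewrite comp_polyZ comp_Xn_poly linearZ /=.
have le_id : (i <= d)%N by rewrite -ltnS.
have -> : (s * d = s * i + s * (d - i))%N by rewrite -mulnDr subnKC.
by rewrite revp_addn ?revpX ?size_exp_leq.
Qed.

Lemma coef_revp_comp_even s d (v D Q : {poly R}) j : (size D <= s.+1)%N -> (size v <= d.+1)%N ->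
  odd s -> revp s D = Q \Po 'X^2 -> (j < s)%N ->
  (revp (s * d) (v \Po D))`_j.*2 = v`_d * (Q ^+ d)`_j.
Proof.
(* Below degree 2s only v_d D^d contributes, except v_(d-1) D^(d-1) at odd degrees. *)
move=> le_Ds le_vd odd_s revD lt_js.
have coef_even (P : {poly R}) i : (P \Po 'X^2)`_i = if odd i then 0 else P`_i./2.
  by rewrite coef_comp_poly_Xn // dvdn2 divn2; case: (odd i).
rewrite revp_comp // coef_sum big_ord_recr /= subnn muln0 mul1r coefZ revD.
rewrite -rmorphXn /= coef_even odd_double doubleK big1 ?add0r // => i _.
rewrite coefZ coefXnM -rmorphXn /= coef_even; case: ltnP => [|le_sj]; first by rewrite mulr0.
suff -> : odd (j.*2 - s * (d - i)) by rewrite mulr0.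
have lt_id := ltn_ord i; have [di1|lt1] : (d - i = 1)%N \/ (1 < d - i)%N by lia.
  by rewrite di1 muln1 in le_sj *; rewrite oddB ?odd_double ?odd_s.
have : (s * 2 <= s * (d - i))%N by rewrite leq_mul2l lt1 orbT.
by move: le_sj; rewrite -muln2; lia.
Qed.

End Reversal.

Section Dickson.
Variable R : comNzRingType.

Definition dickson_rev s (b : R) : {poly R} :=
  \poly_(i < s./2.+1) ((dickson_coef s i)%:R * (- b) ^+ i).

Lemma coef_dickson_rev s (b : R) i :
  (dickson_rev s b)`_i = (dickson_coef s i)%:R * (- b) ^+ i.
Proof. by rewrite coef_poly; case: ltnP => // lt_s2i; rewrite dickson_coef_eq0 ?mul0r. Qed.

Lemma revp_dickson s (b : R) : revp s (dickson s b) = dickson_rev s b \Po 'X^2.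
Proof.
rewrite /dickson_rev poly_def linear_sum [RHS]linear_sum; apply: eq_bigr => i _.
rewrite !linearZ /= comp_Xn_poly -exprM revpXn ?leq_subr //; congr (_ *: 'X^_).
by have := ltn_ord i; have := odd_double_half s; lia.
Qed.

Lemma size_dickson s (b : R) : (0 < s)%N -> size (dickson s b) = s.+1.
Proof.
move=> s_gt0; apply/eqP; rewrite eqn_leq; apply/andP; split.
  rewrite (leq_trans (size_sum _ _ _)) //; apply/bigmax_leqP => i _.
  by rewrite (leq_trans (size_scale_leq _ _)) // size_polyXn ltnS leq_subr.
have := congr1 (coefp 0) (revp_dickson s b); rewrite /= coef_revp /= subn0.
rewrite coef_comp_poly_Xn // coef_dickson_rev dickson_coef0 // mulr1 => top.
by rewrite ltnNge; apply/negP => /leq_sizeP/(_ s (leqnn s)); rewrite top; apply/eqP/oner_neq0.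
Qed.

Lemma coef_dickson_rev_exp s d (b : R) : 2 \in [pchar R] -> (4 < s)%N -> odd s -> odd d ->
  [/\ (dickson_rev s b ^+ d)`_0 = 1, (dickson_rev s b ^+ d)`_1 = b,
      (dickson_rev s b ^+ d)`_2 = (s * d %% 4 == 1)%N%:R * b ^+ 2
    & (s * d %% 8 = 5)%N -> (dickson_rev s b ^+ d)`_3 = 0].
Proof.
move=> pchar2 lt4s odd_s odd_d; have [P2 P3] := odd_dickson_exp_coefs lt4s odd_s odd_d.
have r0 : (dickson_rev s b)`_0 = 1.
  by rewrite coef_dickson_rev dickson_coef0 ?mulr1 //; lia.
have [-> -> -> ->] := coef_exp_low d r0.
rewrite !coef_dickson_rev !(oppr_pchar2 pchar2) dickson_coef1; last lia.
have [ns nd] : s%:R = 1 :> R /\ d%:R = 1 :> R.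
  by rewrite [s%:R](natr_pchar2 pchar2) [d%:R](natr_pchar2 pchar2) odd_s odd_d.
split => //; first by rewrite nd ns !mul1r.
  by rewrite -P2 -(natr_pchar2 pchar2) natrD natrM nd ns; ring.
move=> /P3/negbTE even3; rewrite natrM (pcharf0 pchar2) mulr0 mul0r addr0.
transitivity ((d * dickson_coef s 3 + 'C(d, 3))%:R * b ^+ 3).
  by rewrite natrD natrM nd ns; ring.
by rewrite (natr_pchar2 pchar2) even3 mul0r.
Qed.

End Dickson.

Section Gshift.
Variable R : idomainType.
Hypothesis pchar2 : 2 \in [pchar R].
Variables (f h : {poly R}) (N : nat).
Hypotheses (fE : f = h \Po 'X^2) (size_h : size h = N.+1).

Lemma coef_gshift a k :
  (gshift f a)`_k = if odd k then (h^`N(k.+1./2)).[a ^+ 2] else 0.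
Proof.
pose P := f \Po ('X + a%:P) + (f.[a])%:P.
have gshiftMX : gshift f a * 'X = P.
  have : 'X %| P.
    rewrite -['X]subr0 -polyC0 dvdp_XsubCl rootE !hornerE horner_comp !hornerE.
    by rewrite addrr_pchar2.
  by move/Pdiv.Idomain.divpK; rewrite lead_coefX expr1n scale1r.
have -> : (gshift f a)`_k = P`_k.+1 by rewrite -gshiftMX coefMX.
rewrite coefD coefC addr0 fE -comp_polyA comp_Xn_poly.
(* f(X + a) = h((X + a)^2) = h(X^2 + a^2) *)
have -> : ('X + a%:P) ^+ 2 = ('X + (a ^+ 2)%:P) \Po 'X^2.
  rewrite comp_polyD comp_polyX comp_polyC sqrrD polyC_exp.
  by rewrite (mulrn_pchar (_ : 2 \in [pchar {poly R}])) ?addr0 // pchar_poly.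
by rewrite comp_polyA coef_comp_poly_Xn // dvdn2 /= negbK divn2 coef_comp_poly_XaddC.
Qed.

Lemma coef_gshift_top a j : (j < N)%N ->
  (gshift f a)`_(N.*2.-1 - j.*2) = (h^`N(N - j)).[a ^+ 2].
Proof.
move=> lt_jN; rewrite coef_gshift (_ : odd _ = true); last by lia.
by rewrite (_ : (N.*2.-1 - j.*2).+1./2 = N - j)%N //; lia.
Qed.

Lemma size_gshift a : (0 < N)%N -> size (gshift f a) = N.*2.
Proof.
move=> N_gt0; apply/eqP; rewrite eqn_leq; apply/andP; split.
  apply/leq_sizeP => i le_Ni; rewrite coef_gshift; case: ifP => // odd_i.
  by rewrite nderivn_poly0 ?horner0 // size_h; lia.
have top : (gshift f a)`_(N.*2.-1) = h`_N.
  by have := coef_gshift_top a N_gt0; rewrite /= !subn0 horner_nderivn_top0.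
rewrite -(prednK (_ : 0 < N.*2)%N) ?double_gt0 // ltnNge.
apply: contra (coef_size_neq0 size_h).
by move=> /leq_sizeP/(_ _ (leqnn _)); rewrite top => ->.
Qed.

End Gshift.

Lemma in_Delta_nderivn (F : fieldType) (f h : {poly F}) N a :
    2 \in [pchar F] -> f = h \Po 'X^2 -> size h = N.+1 -> (2 < N)%N -> in_Delta f a ->
  exists2 b, b != 0 & [/\ (h^`N(N - 1)).[a ^+ 2] = h`_N * b,
    (h^`N(N - 2)).[a ^+ 2] = h`_N * (odd N)%:R * b ^+ 2
  & (N %% 4 = 3)%N -> (3 < N)%N -> (h^`N(N - 3)).[a ^+ 2] = 0].
Proof.
move=> pchar2 fE size_h lt2N [v [s [b [lt4s [b_neq0 gE]]]]]; exists b => //.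
have size_D : size (dickson s b) = s.+1 by rewrite size_dickson //; lia.
pose d := (size v).-1; have le_vd : (size v <= d.+1)%N := leqSpred _.
have sdE : (s * d = N.*2.-1)%N.
  have := size_comp_poly v (dickson s b); rewrite -gE (size_gshift pchar2 fE size_h); last lia.
  by move=> ->; rewrite size_D mulnC.
clearbody d; have [odd_s odd_d] : odd s /\ odd d by apply/andP; rewrite -oddM sdE; lia.
have nderivnE j : (j < N)%N -> (j < s)%N ->
    (h^`N(N - j)).[a ^+ 2] = v`_d * (dickson_rev s b ^+ d)`_j.
  move=> lt_jN lt_js; rewrite -(coef_gshift_top pchar2 fE) // gE.
  rewrite -(coef_revp_comp_even (eq_leq size_D) le_vd odd_s (revp_dickson s b) lt_js).
  by rewrite coef_revp sdE ifT //; lia.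
have [r0 r1 r2 r3] := coef_dickson_rev_exp b pchar2 lt4s odd_s odd_d.
rewrite sdE in r2 r3.
have vdE : v`_d = h`_N.
  rewrite -(horner_nderivn_top0 size_h (a ^+ 2)) -[X in h^`N(X)]subn0.
  by rewrite nderivnE ?r0 ?mulr1 //; lia.
rewrite (nderivnE 1%N) ?(nderivnE 2%N) ?vdE ?r1 ?r2 -?mulrA; try lia.
split => //; first by rewrite (_ : (N.*2.-1 %% 4 == 1)%N = odd N) //; lia.
by move=> N4 lt3N; rewrite nderivnE ?r3 ?mulr0 //; lia.
Qed.

Section DegreeThree.
Variables (F : finFieldType) (h : {poly F}) (N : nat) (S : {set F}).
Hypotheses (pchar2 : 2 \in [pchar F]) (size_h : size h = N.+1) (lt2N : (2 < N)%N).
Hypothesis S_gt3 : (3 < #|S|)%N.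
Hypothesis nderivnS : forall A, A \in S ->
  exists2 b, b != 0 & [/\ (h^`N(N - 1)).[A] = h`_N * b,
    (h^`N(N - 2)).[A] = h`_N * (odd N)%:R * b ^+ 2
  & (N %% 4 = 3)%N -> (3 < N)%N -> (h^`N(N - 3)).[A] = 0].

Let N_gt0 : (0 < N)%N := ltnW (ltnW lt2N).
Let N_gt1 : (1 < N)%N := ltnW lt2N.

Let hN_neq0 : h`_N != 0 := coef_size_neq0 size_h.

Let no_small_root_poly (p : {poly F}) :
  p != 0 -> (size p <= 4)%N -> ~ {in S, forall x, root p x}.
Proof.
move=> p_neq0 size_p /(card_roots_lt_size p_neq0)/leq_trans/(_ size_p).
by rewrite ltnS leqNgt S_gt3.
Qed.

Let coef_neq0 (p : {poly F}) i : p`_i != 0 -> p != 0.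
Proof. by apply: contraNneq => ->; rewrite coef0. Qed.

Lemma odd_deg : odd N.
Proof.
apply/negbNE/negP => even_N.
have [A0 A0S] : exists A0, A0 \in S by apply/set0Pn; rewrite -card_gt0; lia.
have [b0 b0_neq0 [E1 _ _]] := nderivnS A0S.
rewrite horner_nderivn_top1 // (natr_pchar2 pchar2) (negbTE even_N) !mul0r addr0 in E1.
have hN1_neq0 : h`_(N - 1) != 0 by rewrite E1 mulf_neq0.
apply: (no_small_root_poly (p := h^`N(N - 2))).
- apply: (coef_neq0 (i := 1)); rewrite coef_nderivn (_ : N - 2 + 1 = N - 1)%N; last lia.
  rewrite (_ : 'C(N - 1, N - 2) = (N - 1)%N); last first.
    by rewrite (_ : (N - 2 = N - 1 - 1)%N) ?bin_sub ?bin1 //; lia.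
  by rewrite -mulr_natr (natr_pchar2 pchar2) oddB ?(negbTE even_N) ?mulr1 //; lia.
- by rewrite (leq_trans (size_nderivn_leq _ _)) // size_h; lia.
- by move=> A /nderivnS [b _ [_ E2 _]]; rewrite /root E2 (negbTE even_N) mulr0 mul0r.
Qed.

Lemma nderivn_quadratic A : A \in S ->
  h`_N * h`_(N - 2) + h`_(N - 1) ^+ 2 = ('C(N, 2) + 1)%:R * h`_N ^+ 2 * A ^+ 2.
Proof.
(* Eliminate b: (h_N b)^2 = (h_(N-1) + h_N A)^2 = h_(N-1)^2 + h_N^2 A^2. *)
move=> /nderivnS [b _ [E1 E2 _]].
rewrite horner_nderivn_top1 // (natr_pchar2 pchar2) odd_deg mul1r in E1.
rewrite horner_nderivn_top2 // [(N - 1)%:R](natr_pchar2 pchar2) oddB // odd_deg in E2.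
rewrite !mul0r addr0 mulr1 in E2.
have -> : h`_(N - 1) = h`_N * b - h`_N * A by rewrite -E1 addrK.
have -> : h`_(N - 2) = h`_N * b ^+ 2 - 'C(N, 2)%:R * h`_N * A ^+ 2 by rewrite -E2 addrK.
apply: subr0_eq; transitivity (2%:R * (h`_N ^+ 2 * (b ^+ 2 - b * A - 'C(N, 2)%:R * A ^+ 2))).
  by rewrite natrD; ring.
by rewrite (pcharf0 pchar2) mul0r.
Qed.

Lemma deg_mod4 : (N %% 4 = 3)%N.
Proof.
apply/eqP/negbNE/negP => N4_neq3.
pose e := ('C(N, 2) + 1)%:R * h`_N ^+ 2.
apply: (no_small_root_poly (p := (h`_N * h`_(N - 2) + h`_(N - 1) ^+ 2)%:P - e *: 'X^2)).
- apply: (coef_neq0 (i := 2)); rewrite coefB coefC coefZ coefXn /= sub0r mulr1 oppr_eq0.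
  rewrite /e (natr_pchar2 pchar2) oddD odd_bin2 ?odd_deg ?(negbTE N4_neq3) //.
  by rewrite mul1r expf_neq0.
- rewrite (leq_trans (size_polyD _ _)) // geq_max size_polyN.
  by rewrite (leq_trans (size_polyC_leq1 _)) // (leq_trans (size_scale_leq _ _)) ?size_polyXn.
- move=> A /nderivn_quadratic EA.
  by rewrite /root hornerD hornerN hornerZ hornerC hornerXn EA /e subrr.
Qed.

Lemma deg_eq3 : N = 3.
Proof.
apply/eqP/negbNE/negP => N_neq3.
have lt3N : (3 < N)%N by have := deg_mod4; move: N_neq3 => /eqP; lia.
apply: (no_small_root_poly (p := h^`N(N - 3))).
- apply: (coef_neq0 (i := 3)); rewrite coef_nderivn subnK 1?ltnW // bin_sub 1?ltnW //.
  by rewrite -mulr_natr (natr_pchar2 pchar2) odd_bin3 ?deg_mod4 // mulr1.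
- by rewrite (leq_trans (size_nderivn_leq _ _)) // size_h; lia.
- by move=> A /nderivnS [b _ [_ _ /(_ deg_mod4 lt3N) E3]]; rewrite /root E3.
Qed.

Lemma cubic_coef_sqr : size h = 4 /\ h`_3 * h`_1 = h`_2 ^+ 2.
Proof.
have [A AS] : exists A, A \in S by apply/set0Pn; rewrite -card_gt0; lia.
have := nderivn_quadratic AS; rewrite size_h deg_eq3 (natr_pchar2 pchar2) /= !mul0r.
by move/eqP; rewrite addr_eq0 (oppr_pchar2 pchar2) => /eqP.
Qed.

End DegreeThree.

Lemma cubic_comp_X2 (F : fieldType) (h : {poly F}) u : 2 \in [pchar F] ->
  size h = 4 -> h`_3 * h`_1 = h`_2 ^+ 2 -> h`_3 * u ^+ 2 = h`_2 ->
  exists rho eta : {poly F},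
    size rho = 2 /\ size eta = 2 /\ h \Po 'X^2 = rho \Po ('X^6 \Po eta).
Proof.
move=> pchar2 size_h h31 h2; have h3_neq0 : h`_3 != 0 := coef_size_neq0 size_h.
have h1 : h`_1 = h`_3 * u ^+ 4 by apply: (mulfI h3_neq0); rewrite h31 -h2; ring.
have pchar2P : 2 \in [pchar {poly F}] by rewrite pchar_poly.
exists ((h`_3)%:P * 'X + (h`_0 + h`_3 * u ^+ 6)%:P), ('X + u%:P).
rewrite size_MXaddC polyC_eq0 (negbTE h3_neq0) size_polyC h3_neq0 size_XaddC.
do 2!split => //.
(* (X + u)^6 = (X^2 + u^2)^3 *)
rewrite comp_Xn_poly comp_poly_MXaddC comp_polyC (_ : 6 = 2 * 3)%N // exprM.
rewrite sqrrD (mulrn_pchar pchar2P) addr0 -polyC_exp.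
rewrite {1}(poly_wide (_ : size h <= 4)%N) ?size_h // !big_ord_recr big_ord0 /=.
rewrite !linearD !linearZ /= !comp_Xn_poly -h2 h1 comp_polyC add0r.
set Y := 'X ^+ 2; set U := (u ^+ 2)%:P.
apply: subr0_eq; transitivity (- (2%:R * ((h`_3)%:P * (Y * U * (Y + U) + U ^+ 3)))).
  by rewrite /U -!mul_polyC !polyCD !polyCM; ring.
by rewrite (pcharf0 pchar2P) mul0r oppr0.
Qed.

Theorem lemma3p3 (F : finFieldType) (k : nat) (f : {poly F}) :
  (1 <= k)%N -> #|F| = (2 ^ k)%N ->
  f^`() = 0 -> (7 <= size f)%N ->
  (3 < #|Delta f|)%N ->
  exists rho eta : {poly F},
    size rho = 2%N /\ size eta = 2%N /\ f = rho \Po ('X^6 \Po eta).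
Proof.
move=> _ cardF f'0 size_f Delta_gt3.
have pchar2 : 2 \in [pchar F] := card_finPcharP cardF (isT : prime 2).
have [h fE] := deriv_eq0_comp_X2 pchar2 f'0.
have size_fh : (size f).-1 = ((size h).-1 * 2)%N by rewrite fE size_comp_poly size_polyXn.
pose N := (size h).-1; have size_h : size h = N.+1 by rewrite /N prednK //; lia.
have lt2N : (2 < N)%N by rewrite /N; lia.
pose S := [set a ^+ 2 | a in Delta f].
have S_gt3 : (3 < #|S|)%N by rewrite card_imset //; exact: sqr_inj_pchar2.
have [size_h4 h31] : size h = 4 /\ h`_3 * h`_1 = h`_2 ^+ 2.
  apply: (cubic_coef_sqr pchar2 size_h lt2N S_gt3) => A /imsetP[a aDelta ->].
  apply: (in_Delta_nderivn pchar2 fE size_h lt2N).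
  by move: aDelta; rewrite inE => /boolp.asboolP.
have [u u2] := sqrt_pchar2 pchar2 (h`_2 / h`_3).
have h2 : h`_3 * u ^+ 2 = h`_2 by rewrite u2 mulrC divfK // coef_size_neq0.
by rewrite fE; apply: cubic_comp_X2 pchar2 size_h4 h31 h2.
Qed.
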